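(* Let $a_c>b_c>0$, $k_e>0$, $a_e^2=a_c^2+k_e$, $b_e^2=b_c^2+k_e$, let $c$ be the ellipse $x^2/a_c^2+y^2/b_c^2=1$, $e$ the ellipse $x^2/a_e^2+y^2/b_e^2=1$, and let $\alpha(x,y)=\bigl(\frac{a_e}{a_c}x,\frac{b_e}{b_c}y\bigr)$, so $\alpha(c)=e$. Let $\dots P_0P_1P_2\dots$ be a billiard in $e$ with caustic $c$ whose side $[P_i,P_{i+1}]$ touches $c$ at $Q_i$. Then there exists a unique billiard $\dots P_0'P_1'P_2'\dots$ in $e$ with caustic $c$ that is conjugate to it, namely $P_i'=\alpha(Q_i)$ for all $i$, and the relation is symmetric: if $Q_i'$ denotes the point where $[P_i',P_{i+1}']$ touches $c$, then $\alpha(Q_{i-1}')=P_i$ for all $i$. Moreover, for all $i$, $$l_i=\overline{P_iQ_i}=\overline{P_i'Q_{i-1}'}=r_i'\quad\text{and}\quad r_i=\overline{P_iQ_{i-1}}=\overline{P_{i-1}'Q_{i-1}'}=l_{i-1}',$$ where $\overline{XY}$ denotes the Euclidean distance.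
   Context: A billiard in $e$ with caustic $c$ is a sequence $(P_i)_{i\in\mathbb Z}$ of points of $e$ with $P_{i+1}\neq P_i$ such that every line $[P_i,P_{i+1}]$ is tangent to $c$ and $[P_{i-1},P_i]\neq[P_i,P_{i+1}]$. A billiard $\dots P_0'P_1'P_2'\dots$ in $e$ with caustic $c$ is called conjugate to $\dots P_0P_1P_2\dots$ if $\alpha$ maps the contact point $Q_i$ of the side $[P_i,P_{i+1}]$ with $c$ to $P_i'$ for every $i$. Notation: $l_i=\overline{P_iQ_i}$, $r_i=\overline{P_iQ_{i-1}}$, and $l_i',r_i'$ are the analogous quantities for the conjugate billiard. *)

From Stdlib Require Import Reals ZArith.
Open Scope R_scope.

Definition point := (R * R)%type.

Definition on_ellipse (a b : R) (P : point) : Prop :=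
  (fst P)^2 / a^2 + (snd P)^2 / b^2 = 1.

Definition line (A B : point) (X : point) : Prop :=
  exists t : R, X = (fst A + t * (fst B - fst A), snd A + t * (snd B - snd A)).

Definition same_line (A B C D : point) : Prop :=
  forall X, line A B X <-> line C D X.

(* The line [A,B] is tangent to the ellipse (a,b) at the contact point Q:
   Q lies on the ellipse and the line [A,B] is the tangent line at Q,
   i.e. A and B satisfy the tangent-line equation x Q1/a^2 + y Q2/b^2 = 1. *)
Definition tangent_at (a b : R) (A B Q : point) : Prop :=
  on_ellipse a b Q /\
  fst A * fst Q / a^2 + snd A * snd Q / b^2 = 1 /\
  fst B * fst Q / a^2 + snd B * snd Q / b^2 = 1.

Definition billiard (ae be ac bc : R) (P : Z -> point) : Prop :=
  (forall i, on_ellipse ae be (P i)) /\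
  (forall i, P (i + 1)%Z <> P i) /\
  (forall i, exists Q, tangent_at ac bc (P i) (P (i + 1)%Z) Q) /\
  (forall i, ~ same_line (P (i - 1)%Z) (P i) (P i) (P (i + 1)%Z)).

Definition contact_points (ac bc : R) (P Q : Z -> point) : Prop :=
  forall i, tangent_at ac bc (P i) (P (i + 1)%Z) (Q i).

Definition alpha (ae be ac bc : R) (X : point) : point :=
  (ae / ac * fst X, be / bc * snd X).

Definition dist2 (X Y : point) : R :=
  sqrt ((fst X - fst Y)^2 + (snd X - snd Y)^2).

Definition conjugate (ae be ac bc : R) (Q P' : Z -> point) : Prop :=
  billiard ae be ac bc P' /\ forall i, P' i = alpha ae be ac bc (Q i).

(** A line missing the origin is [x u1 + y u2 = 1] for a unique vector [u]; for
    the tangent to [c] at [Q] this vector is [polar Q = (Q1/ac^2, Q2/bc^2)].  The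
    pairing [X . polar Y] is unchanged when [(X, Y)] is replaced by
    [(alpha Y, alpha^-1 X)], so [P_i] on the tangent at [Q_i] means [alpha Q_i] on
    the tangent at [alpha^-1 P_i].  Hence the side [alpha Q_i, alpha Q_(i+1)] touches
    [c] at [alpha^-1 P_(i+1)], and the billiard conditions transfer.  Since [c] and
    [e] are confocal, Ivory's lemma [|XY| = |alpha Y, alpha^-1 X|] gives the
    equalities of lengths. *)

From Stdlib Require Import Reals ZArith Lra FunctionalExtensionality.
Open Scope R_scope.

Definition on_lin (u X : point) : Prop := fst X * fst u + snd X * snd u = 1.

Definition polar (a b : R) (Q : point) : point := (fst Q / a ^ 2, snd Q / b ^ 2).

Lemma tangent_atE (a b : R) (A B Q : point) :
  tangent_at a b A B Q <->
  on_ellipse a b Q /\ on_lin (polar a b Q) A /\ on_lin (polar a b Q) B.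
Proof.
  unfold tangent_at, on_lin, polar; cbn [fst snd].
  replace (fst A * fst Q / a ^ 2 + snd A * snd Q / b ^ 2)
    with (fst A * (fst Q / a ^ 2) + snd A * (snd Q / b ^ 2)) by (unfold Rdiv; ring).
  replace (fst B * fst Q / a ^ 2 + snd B * snd Q / b ^ 2)
    with (fst B * (fst Q / a ^ 2) + snd B * (snd Q / b ^ 2)) by (unfold Rdiv; ring).
  tauto.
Qed.

Lemma on_lin_cramer (u A B : point) :
  on_lin u A -> on_lin u B ->
  fst u * (fst A * snd B - snd A * fst B) = snd B - snd A /\
  snd u * (fst A * snd B - snd A * fst B) = fst A - fst B.
Proof.
  destruct A as [a1 a2], B as [b1 b2], u as [u1 u2].
  unfold on_lin; cbn [fst snd]; intros hA hB; split.
  - transitivity (b2 * (a1 * u1 + a2 * u2) - a2 * (b1 * u1 + b2 * u2)); [ring|].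
    rewrite hA, hB; ring.
  - transitivity (a1 * (b1 * u1 + b2 * u2) - b1 * (a1 * u1 + a2 * u2)); [ring|].
    rewrite hA, hB; ring.
Qed.

Section LinesNotThroughOrigin.

Variables (A B : point) (u : point).
Hypotheses (hA : on_lin u A) (hB : on_lin u B).

Lemma on_lin_line (X : point) : line A B X -> on_lin u X.
Proof.
  destruct A as [a1 a2], B as [b1 b2]; unfold on_lin in *; cbn [fst snd] in *.
  intros [t ->]; cbn [fst snd].
  transitivity ((a1 * fst u + a2 * snd u)
                + t * ((b1 * fst u + b2 * snd u) - (a1 * fst u + a2 * snd u))); [ring|].
  rewrite hA, hB; ring.
Qed.

Lemma line_on_lin (X : point) : A <> B -> on_lin u X -> line A B X.
Proof.
  destruct A as [a1 a2], B as [b1 b2], X as [x1 x2], u as [u1 u2].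
  unfold on_lin in *; cbn [fst snd] in *; intros hAB hX.
  assert (Hcoll : (x1 - a1) * (b2 - a2) - (x2 - a2) * (b1 - a1) = 0).
  { (* [u] is a nonzero normal vector to both [B - A] and [X - A] *)
    assert (hBA : u1 * (b1 - a1) + u2 * (b2 - a2) = 0) by lra.
    assert (hXA : u1 * (x1 - a1) + u2 * (x2 - a2) = 0) by lra.
    destruct (Req_dec u1 0) as [hu1|hu1].
    - assert (hu2 : u2 <> 0) by (intro; subst; lra).
      apply (Rmult_eq_reg_l u2); [|exact hu2].
      transitivity ((x1 - a1) * (u1 * (b1 - a1) + u2 * (b2 - a2))
                    - (b1 - a1) * (u1 * (x1 - a1) + u2 * (x2 - a2))); [ring|].
      rewrite hBA, hXA; ring.
    - apply (Rmult_eq_reg_l u1); [|exact hu1].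
      transitivity ((b2 - a2) * (u1 * (x1 - a1) + u2 * (x2 - a2))
                    - (x2 - a2) * (u1 * (b1 - a1) + u2 * (b2 - a2))); [ring|].
      rewrite hBA, hXA; ring. }
  destruct (Req_dec (b1 - a1) 0) as [h1|h1].
  - assert (h2 : b2 - a2 <> 0) by (intro h2; apply hAB; f_equal; lra).
    exists ((x2 - a2) / (b2 - a2)); cbn [fst snd].
    assert (x1 = a1) by (apply (Rmult_eq_reg_r (b2 - a2)); nra).
    f_equal; [nra | field; exact h2].
  - exists ((x1 - a1) / (b1 - a1)); cbn [fst snd].
    f_equal; [field; exact h1|].
    apply (Rmult_eq_reg_r (b1 - a1)); [|exact h1].
    field_simplify; [lra | exact h1].
Qed.

Lemma on_lin_coef_unique (v : point) :
  A <> B -> on_lin v A -> on_lin v B -> u = v.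
Proof.
  intros hAB hvA hvB.
  destruct (on_lin_cramer u A B hA hB) as [hu1 hu2].
  destruct (on_lin_cramer v A B hvA hvB) as [hv1 hv2].
  set (det := fst A * snd B - snd A * fst B) in *.
  destruct (Req_dec det 0) as [hdet|hdet].
  - (* [A] and [B] are collinear with the origin, which forces [A = B] *)
    exfalso; apply hAB.
    rewrite hdet, Rmult_0_r in hu1, hu2.
    destruct A, B; cbn [fst snd] in *; f_equal; lra.
  - destruct u, v; cbn [fst snd] in *; f_equal;
      apply (Rmult_eq_reg_r det); [lra | exact hdet | lra | exact hdet].
Qed.

End LinesNotThroughOrigin.

Lemma same_line_on_lin (u A B C D : point) :
  A <> B -> C <> D -> on_lin u A -> on_lin u B -> on_lin u C -> on_lin u D ->
  same_line A B C D.
Proof.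
  intros hAB hCD hA hB hC hD X; split; intro hX.
  - exact (line_on_lin C D u hC hD X hCD (on_lin_line A B u hA hB X hX)).
  - exact (line_on_lin A B u hA hB X hAB (on_lin_line C D u hC hD X hX)).
Qed.

Lemma polar_inj (a b : R) (Q1 Q2 : point) :
  a <> 0 -> b <> 0 -> polar a b Q1 = polar a b Q2 -> Q1 = Q2.
Proof.
  destruct Q1 as [x1 y1], Q2 as [x2 y2]; unfold polar; cbn [fst snd].
  intros ha hb [= hx hy]; f_equal.
  - apply (Rmult_eq_reg_r (/ a ^ 2)); [exact hx | apply Rinv_neq_0_compat, pow_nonzero, ha].
  - apply (Rmult_eq_reg_r (/ b ^ 2)); [exact hy | apply Rinv_neq_0_compat, pow_nonzero, hb].
Qed.

Lemma tangent_at_unique (a b : R) (A B Q1 Q2 : point) :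
  a <> 0 -> b <> 0 -> A <> B ->
  tangent_at a b A B Q1 -> tangent_at a b A B Q2 -> Q1 = Q2.
Proof.
  intros ha hb hAB [_ [hA1 hB1]]%tangent_atE [_ [hA2 hB2]]%tangent_atE.
  exact (polar_inj a b Q1 Q2 ha hb (on_lin_coef_unique A B _ hA1 hB1 _ hAB hA2 hB2)).
Qed.

Section AffineMap.

Variables a b c d : R.
Hypotheses (ha : a <> 0) (hb : b <> 0) (hc : c <> 0) (hd : d <> 0).

Lemma alphaK (X : point) : alpha c d a b (alpha a b c d X) = X.
Proof. destruct X as [x y]; unfold alpha; cbn [fst snd]; f_equal; field; auto. Qed.

Lemma alpha_inj (X Y : point) : alpha a b c d X = alpha a b c d Y -> X = Y.
Proof. intro h; rewrite <- (alphaK X), h; apply alphaK. Qed.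

Lemma on_ellipse_alpha (X : point) : on_ellipse c d X -> on_ellipse a b (alpha a b c d X).
Proof.
  destruct X as [x y]; unfold on_ellipse, alpha; cbn [fst snd]; intros <-.
  field; auto.
Qed.

Lemma on_lin_polar_alpha (X Y : point) :
  on_lin (polar c d (alpha c d a b X)) (alpha a b c d Y) <-> on_lin (polar c d Y) X.
Proof.
  destruct X as [x y], Y as [u v]; unfold on_lin, polar, alpha; cbn [fst snd].
  match goal with |- ?l = 1 <-> ?r = 1 => replace l with r by (field; auto) end.
  tauto.
Qed.

Lemma dist2_alpha_swap (X Y : point) :
  a ^ 2 - c ^ 2 = b ^ 2 - d ^ 2 -> on_ellipse a b X -> on_ellipse c d Y ->
  dist2 X Y = dist2 (alpha a b c d Y) (alpha c d a b X).
Proof.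
  destruct X as [x y], Y as [u v]; unfold on_ellipse, dist2, alpha; cbn [fst snd].
  intros hk hX hY; f_equal.
  assert (Hdiff : (a / c * u - c / a * x) ^ 2 + (b / d * v - d / b * y) ^ 2
                  - ((x - u) ^ 2 + (y - v) ^ 2)
                = (a ^ 2 - c ^ 2) * (u ^ 2 / c ^ 2 - x ^ 2 / a ^ 2)
                  + (b ^ 2 - d ^ 2) * (v ^ 2 / d ^ 2 - y ^ 2 / b ^ 2)) by (field; auto).
  rewrite <- hk in Hdiff.
  replace ((a ^ 2 - c ^ 2) * (u ^ 2 / c ^ 2 - x ^ 2 / a ^ 2)
           + (a ^ 2 - c ^ 2) * (v ^ 2 / d ^ 2 - y ^ 2 / b ^ 2))
    with ((a ^ 2 - c ^ 2) * ((u ^ 2 / c ^ 2 + v ^ 2 / d ^ 2)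
                             - (x ^ 2 / a ^ 2 + y ^ 2 / b ^ 2))) in Hdiff by ring.
  rewrite hX, hY in Hdiff; lra.
Qed.

End AffineMap.

Section ConjugateBilliard.

Variables ac bc ae be : R.
Hypotheses (hac : ac <> 0) (hbc : bc <> 0) (hae : ae <> 0) (hbe : be <> 0).
Variables P Q : Z -> point.
Hypotheses (hP : billiard ae be ac bc P) (hQ : contact_points ac bc P Q).

Let Pconj (i : Z) : point := alpha ae be ac bc (Q i).
Let Qconj (i : Z) : point := alpha ac bc ae be (P (i + 1)).

Lemma tangent_at_conj (i : Z) : tangent_at ac bc (Pconj i) (Pconj (i + 1)) (Qconj i).
Proof.
  destruct hP as [hPe _].
  destruct (proj1 (tangent_atE _ _ _ _ _) (hQ i)) as [_ [_ hi]].
  destruct (proj1 (tangent_atE _ _ _ _ _) (hQ (i + 1)%Z)) as [_ [hi1 _]].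
  apply tangent_atE; unfold Pconj, Qconj; split; [|split].
  - exact (on_ellipse_alpha ac bc ae be hac hbc hae hbe _ (hPe _)).
  - exact (proj2 (on_lin_polar_alpha ae be ac bc hae hbe hac hbc _ _) hi).
  - exact (proj2 (on_lin_polar_alpha ae be ac bc hae hbe hac hbc _ _) hi1).
Qed.

Lemma contact_points_neq (i : Z) : Q (i + 1)%Z <> Q i.
Proof.
  destruct hP as [_ [hne [_ hnl]]].
  intro hEq; apply (hnl (i + 1)%Z); rewrite Z.add_simpl_r.
  destruct (proj1 (tangent_atE _ _ _ _ _) (hQ i)) as [_ [hi hi1]].
  destruct (proj1 (tangent_atE _ _ _ _ _) (hQ (i + 1)%Z)) as [_ [_ hi2]].
  rewrite hEq in hi2.
  (* [P i], [P (i + 1)] and [P (i + 2)] would all lie on the tangent at [Q i] *)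
  apply (same_line_on_lin _ _ _ _ _ (not_eq_sym (hne i)) (not_eq_sym (hne (i + 1)%Z))
           hi hi1 hi1 hi2).
Qed.

Lemma conj_neq (i : Z) : Pconj (i + 1) <> Pconj i.
Proof.
  intro h; apply (contact_points_neq i), (alpha_inj ae be ac bc hae hbe hac hbc); exact h.
Qed.

Lemma conj_not_same_line (i : Z) :
  ~ same_line (Pconj (i - 1)) (Pconj i) (Pconj i) (Pconj (i + 1)).
Proof.
  destruct hP as [_ [hne _]].
  intro hsl.
  pose proof (tangent_at_conj (i - 1)) as hprev; rewrite Z.sub_add in hprev.
  assert (hnext : tangent_at ac bc (Pconj i) (Pconj (i + 1)) (Qconj (i - 1))).
  { destruct (proj1 (tangent_atE _ _ _ _ _) hprev) as [hR [hA hB]].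
    apply tangent_atE; split; [exact hR | split; [exact hB|]].
    apply (on_lin_line _ _ _ hA hB), hsl; exists 1.
    generalize (Pconj i) (Pconj (i + 1)); intros [x y] [x' y']; cbn [fst snd].
    f_equal; ring. }
  assert (hsame : Qconj i = Qconj (i - 1)).
  { exact (tangent_at_unique _ _ _ _ _ _ hac hbc (not_eq_sym (conj_neq i))
             (tangent_at_conj i) hnext). }
  pose proof (alpha_inj ac bc ae be hac hbc hae hbe _ _ hsame) as hPeq.
  rewrite Z.sub_add in hPeq; exact (hne i hPeq).
Qed.

Lemma conjugate_conj : conjugate ae be ac bc Q Pconj.
Proof.
  split; [|reflexivity].
  split; [|split; [exact conj_neq | split; [|exact conj_not_same_line]]].
  - intro i; exact (on_ellipse_alpha ae be ac bc hae hbe hac hbc _ (proj1 (hQ i))).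
  - intro i; exists (Qconj i); exact (tangent_at_conj i).
Qed.

Lemma contact_points_conj (Q' : Z -> point) (i : Z) :
  contact_points ac bc Pconj Q' -> Q' i = Qconj i.
Proof.
  intro hQ'.
  exact (tangent_at_unique _ _ _ _ _ _ hac hbc (not_eq_sym (conj_neq i))
           (hQ' i) (tangent_at_conj i)).
Qed.

End ConjugateBilliard.

Theorem lemma3p11 (ac bc ke ae be : R) (P Q : Z -> point) :
  ac > bc -> bc > 0 -> ke > 0 -> ae > 0 -> be > 0 ->
  ae ^ 2 = ac ^ 2 + ke -> be ^ 2 = bc ^ 2 + ke ->
  billiard ae be ac bc P -> contact_points ac bc P Q ->
  (exists! P' : Z -> point, conjugate ae be ac bc Q P') /\
  (forall (P' Q' : Z -> point),
     conjugate ae be ac bc Q P' -> contact_points ac bc P' Q' ->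
     forall i : Z,
       alpha ae be ac bc (Q' (i - 1)%Z) = P i /\
       dist2 (P i) (Q i) = dist2 (P' i) (Q' (i - 1)%Z) /\
       dist2 (P i) (Q (i - 1)%Z) = dist2 (P' (i - 1)%Z) (Q' (i - 1)%Z)).
Proof.
  intros hab hb _ hae hbe hea heb hP hQ.
  assert (hac : ac <> 0) by lra; assert (hbc : bc <> 0) by lra.
  assert (hae0 : ae <> 0) by lra; assert (hbe0 : be <> 0) by lra.
  assert (hconf : ae ^ 2 - ac ^ 2 = be ^ 2 - bc ^ 2) by lra.
  assert (hP' : forall P', conjugate ae be ac bc Q P' ->
                  P' = fun i => alpha ae be ac bc (Q i)).
  { intros P' [_ h]; apply functional_extensionality; exact h. }
  split.
  - exists (fun i => alpha ae be ac bc (Q i)); split.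
    + exact (conjugate_conj ac bc ae be hac hbc hae0 hbe0 P Q hP hQ).
    + intros P' h; symmetry; exact (hP' P' h).
  - intros P' Q' hconj hQ' i.
    rewrite (hP' P' hconj) in hQ' |- *.
    rewrite (contact_points_conj ac bc ae be hac hbc hae0 hbe0 P Q hP hQ Q' (i - 1) hQ'),
      Z.sub_add.
    destruct hP as [hPe _].
    split; [exact (alphaK ac bc ae be hac hbc hae0 hbe0 (P i))|].
    split; apply (dist2_alpha_swap ae be ac bc); auto; apply (hQ _).
Qed.
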